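(* Let $\Gamma$ be a Taylor graph with intersection array $\{k,b,1;1,b,k\}$, eigenvalues $\theta_0>\theta_1>\theta_2>\theta_3$, and vertex set $X$. Let $x\in X$ and let $W$ be an irreducible $T(x)$-module with endpoint $1$ and local eigenvalue $\lambda\in\{\sigma,\tau\}$. Then: (i) $W$ has diameter $1$ and is thin. (ii) For any nonzero $w_0\in E^*_1(x)W$, setting $w_1=E^*_2(x)Aw_0$, the pair $\{w_0,w_1\}$ is a basis for $W$, and the matrix representing $A$ with respect to this basis is $\begin{pmatrix}\lambda & (\lambda-\theta_t)^2\\ 1 & \lambda\end{pmatrix}$, where $t=1$ if $\lambda=\sigma$ and $t=2$ if $\lambda=\tau$. (iii) $\sigma=(\theta_1+\theta_2)/2$ and $\tau=(\theta_2+\theta_3)/2$.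
   Context: A Taylor graph is a distance-regular graph with intersection array $\{k,b,1;1,b,k\}$ where $b<k-1$; it has diameter $3$. With $\mathcal{D}=(k-2b-1)^2+4k$, its eigenvalues are $\theta_0=k$, $\theta_1=\frac{k-2b-1+\sqrt{\mathcal{D}}}{2}$, $\theta_2=-1$, $\theta_3=\frac{k-2b-1-\sqrt{\mathcal{D}}}{2}$. Define $\sigma=\frac{k-2b-3+\sqrt{\mathcal{D}}}{4}$ and $\tau=\frac{k-2b-3-\sqrt{\mathcal{D}}}{4}$. Let $A$ be the adjacency matrix, $\partial$ the distance, $V=\mathbb{C}^X$, and for $0\le i\le 3$ let $E^*_i(x)$ be the diagonal matrix with $(E^*_i(x))_{yy}=1$ if $\partial(x,y)=i$ and $0$ otherwise. $T(x)$ is the subalgebra of $\mathrm{Mat}_X(\mathbb{C})$ generated by $A,E^*_0(x),\dots,E^*_3(x)$. For an irreducible $T(x)$-module $W$ (a nonzero $T(x)$-invariant subspace of $V$ with no invariant subspaces other than $0,W$), its endpoint is $\min\{i:E^*_i(x)W\neq0\}$, its diameter is $|\{i:E^*_i(x)W\ne 0\}|-1$, and $W$ is thin if $\dim E^*_i(x)W\le 1$ for all $i$. An irreducible module $W$ with endpoint $1$ has local eigenvalue $\lambda$ if $E^*_1(x)W$ is one-dimensional and consists of eigenvectors of $E^*_1(x)AE^*_1(x)$ with eigenvalue $\lambda$. *)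

From HB Require Import structures.
From mathcomp Require Import all_boot all_order all_algebra.
From mathcomp Require Import algC.
Set Implicit Arguments. Unset Strict Implicit. Unset Printing Implicit Defensive.
Import Order.TTheory GRing.Theory Num.Theory.
Local Open Scope ring_scope.

Section Graph.
Variable n : nat.
Variable adj : rel 'I_n.

Fixpoint walk_within (i : nat) (x y : 'I_n) : bool :=
  match i with
  | 0 => x == y
  | i'.+1 => (x == y) || [exists z, adj x z && walk_within i' z y]
  end.

Definition is_dist (x y : 'I_n) (i : nat) : bool :=
  walk_within i x y && ((i == 0)%N || ~~ walk_within i.-1 x y).

Definition nbr_count (x y : 'I_n) (j : nat) : nat :=
  #|[set z | adj y z && is_dist x z j]|.

(* distance-regular graph with intersection array {bs ; cs}
   = {b_0,...,b_{d-1} ; c_1,...,c_d}, diameter d = size bs *)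
Definition drg_with_array (bs cs : seq nat) : Prop :=
  let d := size bs in
  [/\ size cs = d, symmetric adj, irreflexive adj &
      (forall x y, exists2 i, (i <= d)%N & is_dist x y i)] /\
  [/\ (exists x y, is_dist x y d),
      (forall x y i, is_dist x y i -> (0 < i <= d)%N -> nbr_count x y i.-1 = nth 0%N cs i.-1)
    & (forall x y i, is_dist x y i -> (i < d)%N -> nbr_count x y i.+1 = nth 0%N bs i)].

Definition adjmx : 'M[algC]_n := \matrix_(i, j) (adj i j)%:R.

Definition Estar (x : 'I_n) (i : nat) : 'M[algC]_n :=
  diag_mx (\row_y (is_dist x y i)%:R).

Inductive inT (x : 'I_n) : 'M[algC]_n -> Prop :=
| inT_A : inT x adjmx
| inT_E i : (i <= 3)%N -> inT x (Estar x i)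
| inT_1 : inT x 1%:M
| inT_add M N : inT x M -> inT x N -> inT x (M + N)
| inT_scale (c : algC) M : inT x M -> inT x (c *: M)
| inT_mul M N : inT x M -> inT x N -> inT x (M *m N).

(* subspaces of V = C^X are represented by row spaces of square matrices;
   vectors are row vectors and a matrix M acts by v |-> v *m M
   (all generators of T(x) are symmetric). *)
Definition Tinvariant (x : 'I_n) (U : 'M[algC]_n) : Prop :=
  forall M, inT x M -> (U *m M <= U)%MS.

Definition irreducible_Tmodule (x : 'I_n) (W : 'M[algC]_n) : Prop :=
  [/\ W != 0, Tinvariant x W &
      forall U : 'M[algC]_n, (U <= W)%MS -> Tinvariant x U ->
        U == 0 \/ (U == W)%MS].

(* E*_i(x) W is the row space of W *m E*_i(x) *)
Definition has_endpoint (x : 'I_n) (W : 'M[algC]_n) (e : nat) : Prop :=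
  (\rank (W *m Estar x e) != 0)%N /\
  forall i, (i < e)%N -> \rank (W *m Estar x i) = 0%N.

Definition diameter_is (x : 'I_n) (W : 'M[algC]_n) (d : nat) : Prop :=
  #|[set i : 'I_4 | \rank (W *m Estar x i) != 0%N]|.-1 = d.

Definition thin (x : 'I_n) (W : 'M[algC]_n) : Prop :=
  forall i, (\rank (W *m Estar x i) <= 1)%N.

Definition local_eigenvalue (x : 'I_n) (W : 'M[algC]_n) (lam : algC) : Prop :=
  \rank (W *m Estar x 1) = 1%N /\
  forall v : 'rV[algC]_n, (v <= W *m Estar x 1)%MS ->
    v *m (Estar x 1 *m adjmx *m Estar x 1) = lam *: v.

End Graph.

Definition is_taylor_graph (n : nat) (adj : rel 'I_n) (k b : nat) : Prop :=
  (b.+1 < k)%N /\ drg_with_array adj [:: k; b; 1%N] [:: 1%N; b; k].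

Definition taylorD (k b : nat) : algC :=
  (k%:R - 2 * b%:R - 1) ^+ 2 + 4 * k%:R.
Definition theta0 (k b : nat) : algC := k%:R.
Definition theta1 (k b : nat) : algC := (k%:R - 2 * b%:R - 1 + sqrtC (taylorD k b)) / 2.
Definition theta2 (k b : nat) : algC := -1.
Definition theta3 (k b : nat) : algC := (k%:R - 2 * b%:R - 1 - sqrtC (taylorD k b)) / 2.
Definition tsigma (k b : nat) : algC := (k%:R - 2 * b%:R - 3 + sqrtC (taylorD k b)) / 4.
Definition ttau (k b : nat) : algC := (k%:R - 2 * b%:R - 3 - sqrtC (taylorD k b)) / 4.

(* In a Taylor graph the counts k_1 = k_2 = k, k_3 = 1 show that every vertex u
   has a unique antipode u' at distance 3; u |-> u' is an involutive automorphism,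
   and for neighbours y, u of x we have y ~ u' iff y <> u and y is not adjacent
   to u.  Let w0 span E*_1(x)W.  Since E*_0(x)W = 0 the entries of w0 sum to 0,
   and the antipodal relation then gives w1(u') = -(1 + lam) w0(u), whence
   A w0 = lam w0 + w1 and A w1 = (lam + 1)^2 w0 + lam w1.  So span(w0, w1) is a
   T(x)-submodule of W, hence equal to W; it is 2-dimensional because
   lam <> -1 when b > 0, which also gives the diameter and thinness.
   Finally sigma - theta_1 = -(sigma + 1) and theta_2 = -1. *)

From HB Require Import structures.
From mathcomp Require Import all_boot all_order all_algebra.
From mathcomp Require Import algC ring.
Set Implicit Arguments. Unset Strict Implicit. Unset Printing Implicit Defensive.
Import Order.TTheory GRing.Theory Num.Theory.

Section Distance.
Variables (n : nat) (adj : rel 'I_n).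

Lemma walk_withinS i x y : walk_within adj i x y -> walk_within adj i.+1 x y.
Proof.
elim: i x y => [|i IH] x y /=; first by move->.
case/orP=> [->//|/existsP[z /andP[xz zy]]].
by apply/orP; right; apply/existsP; exists z; rewrite xz; apply: IH.
Qed.

Lemma walk_within_le i j x y :
  (i <= j)%N -> walk_within adj i x y -> walk_within adj j x y.
Proof.
move/subnK<-; elim: (j - i)%N => [//|d IH] w.
by rewrite addSn walk_withinS ?IH.
Qed.

Lemma walk_within_refl i x : walk_within adj i x x.
Proof. exact: walk_within_le (leq0n i) (eqxx x). Qed.

Lemma walk_within_cat i j x y z :
  walk_within adj i x y -> walk_within adj j y z -> walk_within adj (i + j) x z.
Proof.
elim: i x => [|i IH] x /=; first by move/eqP->.
case/orP=> [/eqP-> w|/existsP[u /andP[xu uy]] w].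
  exact: walk_within_le (leq_addl i.+1 j) w.
by apply/orP; right; apply/existsP; exists u; rewrite xu (IH _ uy).
Qed.

Lemma walk_within1 x y : walk_within adj 1 x y = (x == y) || adj x y.
Proof.
congr (_ || _); apply/existsP/idP => [[z /andP[xz /eqP<-]] //|xy].
by exists y; rewrite xy eqxx.
Qed.

Lemma is_dist_le m x y j : walk_within adj m x y -> is_dist adj x y j -> (j <= m)%N.
Proof.
move=> w /andP[_]; case: j => [//|j] /= nw.
by rewrite ltnNge; apply: contra nw => /walk_within_le; apply.
Qed.

Lemma is_dist_uniq x y i j : is_dist adj x y i -> is_dist adj x y j -> i = j.
Proof.
move=> di dj; apply/eqP; rewrite eqn_leq.
by rewrite (is_dist_le (proj1 (andP di)) dj) (is_dist_le (proj1 (andP dj)) di).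
Qed.

Lemma is_distE x y i j : is_dist adj x y j -> is_dist adj x y i = (i == j).
Proof. by move=> dj; apply/idP/eqP => [/is_dist_uniq/(_ dj)|->]. Qed.

Lemma is_dist0 x y : is_dist adj x y 0 = (x == y).
Proof. by rewrite /is_dist andbT. Qed.

Lemma is_dist_refl x : is_dist adj x x 0.
Proof. by rewrite is_dist0. Qed.

Lemma is_dist1 x y : irreflexive adj -> is_dist adj x y 1 = adj x y.
Proof.
move=> irr; rewrite /is_dist walk_within1 /=.
by have [->|] := eqVneq x y; rewrite ?irr // andbT.
Qed.

Lemma is_dist2 x y :
  walk_within adj 2 x y -> is_dist adj x y 2 = (x != y) && ~~ adj x y.
Proof. by move=> w; rewrite /is_dist w walk_within1 negb_or. Qed.

Lemma sum_nbr_count_const x i j c :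
  (forall z, is_dist adj x z j -> nbr_count adj x z i = c) ->
  (\sum_(z | is_dist adj x z j) nbr_count adj x z i =
   #|[set z | is_dist adj x z j]| * c)%N.
Proof. by move=> Hc; rewrite -sum_nat_cond_const; apply: eq_bigr. Qed.

Hypothesis adj_sym : symmetric adj.

Lemma walk_within_sym i x y : walk_within adj i x y -> walk_within adj i y x.
Proof.
elim: i x y => [|i IH] x y; first by rewrite /= eq_sym.
case/orP=> [/eqP->|/existsP[u /andP[xu uy]]]; first exact: walk_within_refl.
rewrite -addn1; apply: walk_within_cat (IH _ _ uy) _.
by rewrite walk_within1 adj_sym xu orbT.
Qed.

Lemma is_dist_sym x y i : is_dist adj x y i -> is_dist adj y x i.
Proof.
case/andP=> w nw; rewrite /is_dist walk_within_sym //=.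
by case/orP: nw => [->//|nw]; rewrite (contra (@walk_within_sym _ _ _) nw) orbT.
Qed.

Lemma is_dist_nbr x y i : is_dist adj x y i.+1 -> exists2 z, adj y z & is_dist adj x z i.
Proof.
case/andP=> /walk_within_sym /orP[/eqP yx|/existsP[z /andP[yz zx]]] /= nw.
  by move: nw; rewrite yx walk_within_refl.
exists z => //; rewrite /is_dist walk_within_sym //=.
case: i nw zx => [//|i] nw _ /=; apply: contra nw => w.
by rewrite -addn1 (walk_within_cat w) // walk_within1 adj_sym yz orbT.
Qed.

Lemma sum_nbr_count_exchange x i j :
  (\sum_(z | is_dist adj x z j) nbr_count adj x z i =
   \sum_(u | is_dist adj x u i) nbr_count adj x u j)%N.
Proof.
rewrite /nbr_count; under eq_bigr do rewrite -sum1_card.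
under [RHS]eq_bigr do rewrite -sum1_card.
rewrite (exchange_big_dep (is_dist adj x ^~ i)) => [|z u _]; last by rewrite !inE => /andP[].
apply: eq_bigr => u ui; apply: eq_bigl => z.
by rewrite !inE ui andbT andbC adj_sym.
Qed.

End Distance.

Section TaylorGraph.
Variables (n : nat) (adj : rel 'I_n) (k b : nat).
Hypothesis HG : is_taylor_graph adj k b.

Lemma taylor_sym : symmetric adj.
Proof. by case: HG => _ [[]]. Qed.

Lemma taylor_irr : irreflexive adj.
Proof. by case: HG => _ [[]]. Qed.

Lemma taylor_dist x y : exists2 i, (i <= 3)%N & is_dist adj x y i.
Proof. by case: HG => _ [[_ _ _ Hd] _]; apply: Hd. Qed.

Lemma taylor_c x y i : is_dist adj x y i -> (0 < i <= 3)%N ->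
  nbr_count adj x y i.-1 = nth 0%N [:: 1%N; b; k] i.-1.
Proof. by case: HG => _ [_ [_ Hc _]]; apply: Hc. Qed.

Lemma taylor_b x y i : is_dist adj x y i -> (i < 3)%N ->
  nbr_count adj x y i.+1 = nth 0%N [:: k; b; 1%N] i.
Proof. by case: HG => _ [_ [_ _ Hb]]; apply: Hb. Qed.

Lemma taylor_k_gt0 : (0 < k)%N.
Proof. by case: HG => /ltnW /(leq_ltn_trans (leq0n b)). Qed.

Lemma taylor_b_gt0 : (0 < b)%N.
Proof.
have [x [y d3]] : exists x y, is_dist adj x y 3 by case: HG => _ [_ []].
have [z _ d2] := is_dist_nbr taylor_sym d3.
have [u zu d1] := is_dist_nbr taylor_sym d2.
have /= <- := taylor_c d2 isT; apply/card_gt0P; exists u.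
by rewrite inE zu d1.
Qed.

Lemma card_dist1 x : #|[set y | is_dist adj x y 1]| = k.
Proof.
have /= <- := taylor_b (is_dist_refl adj x) isT; apply: eq_card => y.
by rewrite !inE (is_dist1 _ _ taylor_irr) andbb.
Qed.

Lemma card_dist2 x : #|[set y | is_dist adj x y 2]| = k.
Proof.
have := sum_nbr_count_exchange taylor_sym x 1 2.
rewrite !(sum_nbr_count_const (c := b)) => [|z /taylor_b/(_ isT)//|z /taylor_c/(_ isT)//].
by rewrite card_dist1 => /eqP; rewrite eqn_pmul2r ?taylor_b_gt0 // => /eqP.
Qed.

Lemma card_dist3 x : #|[set y | is_dist adj x y 3]| = 1%N.
Proof.
have := sum_nbr_count_exchange taylor_sym x 2 3.
rewrite (sum_nbr_count_const (c := k)) ?(sum_nbr_count_const (c := 1%N))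
  => [|z /taylor_b/(_ isT)//|z /taylor_c/(_ isT)//].
rewrite card_dist2 muln1 -{2}[k]mul1n => /eqP.
by rewrite eqn_pmul2r ?taylor_k_gt0 // => /eqP.
Qed.

Definition antipode (x : 'I_n) : 'I_n := odflt x [pick y | is_dist adj x y 3].

Lemma is_dist3_antipode x y : is_dist adj x y 3 = (y == antipode x).
Proof.
have /eqP/cards1P[c S3] := card_dist3 x.
have Hc z : is_dist adj x z 3 = (z == c) by rewrite -in_set1 -S3 inE.
rewrite Hc /antipode; case: pickP => [z | /(_ c)]; last by rewrite Hc eqxx.
by rewrite Hc => /eqP->.
Qed.

Lemma antipode_dist x : is_dist adj x (antipode x) 3.
Proof. by rewrite is_dist3_antipode. Qed.

Lemma antipodeK : involutive antipode.
Proof.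
move=> x; apply/esym/eqP; rewrite -is_dist3_antipode.
exact: is_dist_sym taylor_sym _ _ _ (antipode_dist x).
Qed.

Lemma adj_antipode y u : adj y (antipode u) = is_dist adj y u 2.
Proof.
apply/idP/idP => [yu' | /(is_dist_sym taylor_sym) d2].
  have [i i_le3 dui] := taylor_dist u y.
  have : (3 <= i + 1)%N.
    apply: is_dist_le (antipode_dist u); apply: walk_within_cat (proj1 (andP dui)) _.
    by rewrite walk_within1 yu' orbT.
  case: i i_le3 dui => [|[|[|[|//]]]] //= _; first by move/(is_dist_sym taylor_sym).
  by rewrite is_dist3_antipode => /eqP y_u'; rewrite y_u' taylor_irr in yu'.
have /= := taylor_b d2 isT; rewrite /nbr_count => S3.
have /card_gt0P[z] : (0 < #|[set z | adj y z && is_dist adj u z 3]|)%N by rewrite S3.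
by rewrite inE is_dist3_antipode => /andP[yz /eqP <-].
Qed.

Lemma adj_antipodeC u v : adj (antipode u) v = adj u (antipode v).
Proof. by rewrite taylor_sym !adj_antipode; apply/idP/idP => /(is_dist_sym taylor_sym). Qed.

Lemma is_dist1_antipode x y : is_dist adj x (antipode y) 1 = is_dist adj x y 2.
Proof. by rewrite (is_dist1 _ _ taylor_irr) adj_antipode. Qed.

Lemma adj_antipode_dist1 x y u : is_dist adj x y 1 -> is_dist adj x u 1 ->
  adj y (antipode u) = (y != u) && ~~ adj y u.
Proof.
rewrite !(is_dist1 _ _ taylor_irr) => xy xu; rewrite adj_antipode is_dist2 //.
apply: (walk_within_cat (i := 1) (j := 1) (y := x));
  by rewrite walk_within1 ?xu ?orbT // taylor_sym xy orbT.
Qed.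

End TaylorGraph.

Local Open Scope ring_scope.

Section TerwilligerModules.
Variables (n : nat) (adj : rel 'I_n).

Lemma mulmx_adj_entry (v : 'rV[algC]_n) j :
  (v *m adjmx adj) 0 j = \sum_i v 0 i * (adj i j)%:R.
Proof. by rewrite mxE; apply: eq_bigr => i _; rewrite mxE. Qed.

Lemma mulmx_Estar_entry x i (v : 'rV[algC]_n) y :
  (v *m Estar adj x i) 0 y = v 0 y * (is_dist adj x y i)%:R.
Proof. by rewrite mul_mx_diag !mxE. Qed.

Lemma mulmx_Estar_supp x i0 (v : 'rV[algC]_n) :
  (forall y, ~~ is_dist adj x y i0 -> v 0 y = 0) ->
  forall i, v *m Estar adj x i = if i == i0 then v else 0.
Proof.
move=> v0 i; apply/rowP => y; rewrite mulmx_Estar_entry.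
have [dy|/v0 vy0] := boolP (is_dist adj x y i0).
  by rewrite (is_distE i dy); case: eqP; rewrite ?mxE ?mulr1 ?mulr0.
by rewrite vy0 mul0r; case: ifP; rewrite ?mxE ?vy0.
Qed.

Lemma Tinvariant_genmx x m (U : 'M[algC]_(m, n)) :
  (U *m adjmx adj <= U)%MS -> (forall i, (i <= 3)%N -> (U *m Estar adj x i <= U)%MS) ->
  Tinvariant adj x <<U>>%MS.
Proof.
move=> UA UE M TM; rewrite (eqmxMr _ (genmxE U)) genmxE.
elim: TM => {M} [|i /UE //|||c M _ UM|M N _ UM _ UN].
- exact: UA.
- by rewrite mulmx1.
- by move=> M N _ UM _ UN; rewrite mulmxDr addmx_sub.
- by rewrite -scalemxAr scalemx_sub.
- by rewrite mulmxA (submx_trans (submxMr _ UM)).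
Qed.

Lemma diameter1_thin_of_rank x (W : 'M[algC]_n) :
  (forall i, \rank (W *m Estar adj x i) = ((i == 1%N) + (i == 2%N))%N) ->
  diameter_is adj x W 1 /\ thin adj x W.
Proof.
move=> rkW; split; last by move=> i; rewrite rkW; case: i => [|[|[|i]]].
rewrite /diameter_is (_ : [set i : 'I_4 | _] = [set inord 1; inord 2]).
  by rewrite cards2 -val_eqE /= !inordK.
by apply/setP => -[[|[|[|[|i]]]] ?]; rewrite !inE rkW -!val_eqE /= !inordK.
Qed.

End TerwilligerModules.

Lemma rank_col_mx_fixed_killed n (P : 'M[algC]_n) (u v : 'rV[algC]_n) :
  u *m P = u -> v *m P = 0 -> u != 0 -> v != 0 -> \rank (col_mx u v) = 2%N.
Proof.
move=> uP vP u0 v0; rewrite -addsmxE mxrank_disjoint_sum ?rank_rV ?u0 ?v0 //.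
apply/eqP/rowV0P => w; rewrite sub_capmx => /andP[/sub_rVP[a wu] /sub_rVP[c wv]].
transitivity (w *m P); first by rewrite wu -scalemxAl uP.
by rewrite wv -scalemxAl vP scaler0.
Qed.

Section TaylorModule.
Variables (n : nat) (adj : rel 'I_n) (k b : nat).
Hypothesis HG : is_taylor_graph adj k b.
Variables (x : 'I_n) (W : 'M[algC]_n) (lam : algC).
Hypotheses (HW : irreducible_Tmodule adj x W) (Hend : has_endpoint adj x W 1)
  (Hloc : local_eigenvalue adj x W lam).
Variable w0 : 'rV[algC]_n.
Hypothesis w0W : (w0 <= W *m Estar adj x 1)%MS.

Local Notation A := (adjmx adj).
Local Notation E := (Estar adj x).
Local Notation w1 := (w0 *m A *m E 2).

Lemma W_invariant M : inT adj x M -> (W *m M <= W)%MS.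
Proof. by case: HW => _ Winv _; apply: Winv. Qed.

Lemma w0_sub : (w0 <= W)%MS.
Proof. exact: submx_trans w0W (W_invariant (@inT_E _ adj x 1 isT)). Qed.

Lemma w0_eq0 y : ~~ is_dist adj x y 1 -> w0 0 y = 0.
Proof.
by case/submxP: w0W => D ->; rewrite mulmxA mulmx_Estar_entry => /negbTE->; rewrite mulr0.
Qed.

Lemma w0_Estar i : w0 *m E i = if i == 1%N then w0 else 0.
Proof. exact: mulmx_Estar_supp w0_eq0 i. Qed.

Lemma w1_Estar i : w1 *m E i = if i == 2%N then w1 else 0.
Proof.
by apply: mulmx_Estar_supp => y /negbTE dy; rewrite mulmx_Estar_entry dy mulr0.
Qed.

Lemma w0_local u : is_dist adj x u 1 -> (w0 *m A) 0 u = lam * w0 0 u.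
Proof.
move=> du; have := congr1 (fun v : 'rV_n => v 0 u) (proj2 Hloc w0 w0W).
by rewrite /= !mulmxA w0_Estar mulmx_Estar_entry du mulr1 => ->; rewrite mxE.
Qed.

Lemma w0_adj_at_x : (w0 *m A) 0 x = 0.
Proof.
have WE0 : W *m E 0 = 0 by apply/eqP; rewrite -mxrank_eq0 (proj2 Hend 0%N isT).
have : (w0 *m A *m E 0 <= W *m E 0)%MS.
  by apply/submxMr/(submx_trans (submxMr _ w0_sub))/W_invariant/inT_A.
rewrite WE0 submx0 => /eqP/rowP/(_ x).
by rewrite mulmx_Estar_entry is_dist_refl mulr1 => ->; rewrite mxE.
Qed.

Lemma sum_w0 : \sum_y w0 0 y = 0.
Proof.
rewrite -[RHS]w0_adj_at_x mulmx_adj_entry; apply: eq_bigr => y _.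
have [dy|/w0_eq0->] := boolP (is_dist adj x y 1); last by rewrite mul0r.
by rewrite (taylor_sym HG) -(is_dist1 _ _ (taylor_irr HG)) dy mulr1.
Qed.

Lemma w0_adj : w0 *m A = lam *: w0 + w1.
Proof.
apply/rowP => j; rewrite [RHS]mxE [(lam *: w0) 0 j]mxE mulmx_Estar_entry.
have [i i_le3 dj] := taylor_dist HG x j.
have w0j : i != 1%N -> w0 0 j = 0 by move=> i1; apply: w0_eq0; rewrite (is_distE 1 dj) eq_sym.
case: i i_le3 dj w0j => [|[|[|[|//]]]] _ dj w0j; rewrite (is_distE 2 dj) /=.
- by move: dj w0j; rewrite is_dist0 => /eqP<- ->//; rewrite w0_adj_at_x !mulr0 addr0.
- by rewrite w0_local // mulr0 addr0.
- by rewrite w0j // mulr0 mulr1 add0r.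
rewrite w0j // !mulr0 addr0 mulmx_adj_entry big1 // => y _.
have [dy|/w0_eq0->] := boolP (is_dist adj x y 1); last by rewrite mul0r.
case yj: (adj y j); last by rewrite mulr0.
have := is_dist_le (walk_within_cat (proj1 (andP dy)) (_ : walk_within adj 1 y j)) dj.
by rewrite walk_within1 yj orbT => /(_ isT).
Qed.

Lemma w1_entry j : w1 0 j = - (1 + lam) * w0 0 (antipode adj j).
Proof.
rewrite mulmx_Estar_entry -(is_dist1_antipode HG).
have [du|/w0_eq0->] := boolP (is_dist adj x (antipode adj j) 1); last by rewrite !mulr0.
set u := antipode adj j in du *.
have pick_u : \sum_y w0 0 y * (y == u)%:R = w0 0 u.
  by rewrite (bigD1 u) //= eqxx mulr1 big1 ?addr0 // => y /negbTE->; rewrite mulr0.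
rewrite mulr1 mulmx_adj_entry.
transitivity (\sum_y (w0 0 y - w0 0 y * (y == u)%:R - w0 0 y * (adj y u)%:R)).
  apply: eq_bigr => y _.
  have [dy|/w0_eq0->] := boolP (is_dist adj x y 1); last by rewrite !mul0r !subr0.
  rewrite -{1}[j](antipodeK HG) (adj_antipode_dist1 HG dy du).
  have [->|_] := eqVneq y u; first by rewrite (taylor_irr HG) mulr0 mulr1 subrr subr0.
  by case: (adj y u); rewrite /= ?mulr0 ?mulr1 ?subr0 ?subrr.
by rewrite !sumrB sum_w0 pick_u -mulmx_adj_entry w0_local //; ring.
Qed.

Lemma w1_adj : w1 *m A = (lam + 1) ^+ 2 *: w0 + lam *: w1.
Proof.
apply/rowP => j; rewrite [RHS]mxE [(_ *: w0) 0 j]mxE [(lam *: w1) 0 j]mxE.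
rewrite mulmx_adj_entry (reindex_inj (can_inj (antipodeK HG))) /=.
transitivity (- (1 + lam) * (w0 *m A) 0 (antipode adj j)).
  rewrite mulmx_adj_entry mulr_sumr; apply: eq_bigr => z _.
  by rewrite w1_entry (antipodeK HG) (adj_antipodeC HG) mulrA.
rewrite {1}w0_adj [(lam *: w0 + w1) _ _]mxE [(lam *: w0) _ _]mxE.
by rewrite !w1_entry (antipodeK HG); ring.
Qed.

Hypotheses (lam_neq_m1 : lam + 1 != 0) (w0_neq0 : w0 != 0).

Lemma w1_neq0 : w1 != 0.
Proof.
apply: contra_neq w0_neq0 => /rowP w1_0; apply/rowP => y.
have /eqP := w1_0 (antipode adj y); rewrite w1_entry (antipodeK HG) !mxE.
by rewrite mulf_eq0 oppr_eq0 addrC (negbTE lam_neq_m1) => /eqP.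
Qed.

Lemma col_mx_w0w1_eqmx : (col_mx w0 w1 == W)%MS.
Proof.
case: HW => _ _ Wirr.
have w0U : (w0 <= col_mx w0 w1)%MS by rewrite -addsmxE addsmxSl.
have w1U : (w1 <= col_mx w0 w1)%MS by rewrite -addsmxE addsmxSr.
have UW : (<<col_mx w0 w1>> <= W)%MS.
  rewrite genmxE col_mx_sub w0_sub (submx_trans _ (W_invariant (@inT_E _ adj x 2 isT))) //.
  by apply/submxMr/(submx_trans (submxMr _ w0_sub))/W_invariant/inT_A.
have UT : Tinvariant adj x <<col_mx w0 w1>>%MS.
  apply: Tinvariant_genmx => [|i _].
    by rewrite mul_col_mx col_mx_sub w1_adj {1}w0_adj !addmx_sub ?scalemx_sub ?w0U ?w1U.
  rewrite mul_col_mx col_mx_sub w0_Estar w1_Estar.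
  by do 2 case: ifP => _; rewrite ?sub0mx ?w0U ?w1U.
case: (Wirr _ UW UT) => [/eqP U0|]; last by rewrite !genmxE.
by move: w0U; rewrite -(genmxE (col_mx w0 w1)) U0 submx0 (negbTE w0_neq0).
Qed.

Lemma rank_col_mx_w0w1 : \rank (col_mx w0 w1) = 2%N.
Proof.
by apply: (rank_col_mx_fixed_killed (P := E 1)); rewrite ?w0_Estar ?w1_Estar ?w0_neq0 ?w1_neq0.
Qed.

Lemma rank_W_Estar i : \rank (W *m E i) = ((i == 1%N) + (i == 2%N))%N.
Proof.
rewrite -(eqmxMr _ (eqmxP col_mx_w0w1_eqmx)) mul_col_mx w0_Estar w1_Estar.
case: i => [|[|[|i]]] /=; rewrite ?col_mx0 ?mxrank0 // -addsmxE ?addsmx0 ?adds0mx.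
  by rewrite rank_rV w0_neq0.
by rewrite rank_rV w1_neq0.
Qed.

End TaylorModule.

Lemma tsigma_midpoint k b : tsigma k b = (theta1 k b + theta2 k b) / 2.
Proof. by rewrite /tsigma /theta1 /theta2; field. Qed.

Lemma ttau_midpoint k b : ttau k b = (theta2 k b + theta3 k b) / 2.
Proof. by rewrite /ttau /theta2 /theta3; field. Qed.

Lemma tsigma_sub_theta1 k b : tsigma k b - theta1 k b = - (tsigma k b + 1).
Proof. by rewrite /tsigma /theta1; field. Qed.

Lemma local_eigenvalue_sqr k b lam : lam = tsigma k b \/ lam = ttau k b ->
  (4 * lam - (k%:R - 2 * b%:R - 3)) ^+ 2 = taylorD k b.
Proof.
rewrite -(sqrtCK (taylorD k b)); case=> ->; rewrite /tsigma /ttau.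
  by congr (_ ^+ 2); field.
by rewrite -sqrrN; congr (_ ^+ 2); field.
Qed.

Lemma local_eigenvalue_neq_m1 k b lam : (0 < b)%N ->
  lam = tsigma k b \/ lam = ttau k b -> lam + 1 != 0.
Proof.
move=> b_gt0 Hlam; apply/negP => /eqP lam_m1.
have := local_eigenvalue_sqr Hlam; have -> : lam = -1 by rewrite -[lam](addrK 1) lam_m1 sub0r.
move/eqP; rewrite -subr_eq0 /taylorD.
(* [taylorD k b = (k - 2b + 1)^2 + 8b] *)
have -> : (4 * -1 - (k%:R - 2 * b%:R - 3)) ^+ 2 - ((k%:R - 2 * b%:R - 1) ^+ 2 + 4 * k%:R)
  = - (8 * b)%:R :> algC by rewrite natrM; ring.
by rewrite oppr_eq0 pnatr_eq0 muln_eq0 [b == 0]eqn0Ngt b_gt0.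
Qed.

Unset Implicit Arguments.
Theorem lemma7p3 (n : nat) (adj : rel 'I_n) (k b : nat)
  (HG : is_taylor_graph adj k b) (x : 'I_n) (W : 'M[algC]_n) (lam : algC)
  (HW : irreducible_Tmodule adj x W) (Hend : has_endpoint adj x W 1)
  (Hloc : local_eigenvalue adj x W lam)
  (Hlam : lam = tsigma k b \/ lam = ttau k b) :
  (diameter_is adj x W 1 /\ thin adj x W) /\
  (forall w0 : 'rV[algC]_n, w0 != 0 -> (w0 <= W *m Estar adj x 1)%MS ->
     let w1 := w0 *m adjmx adj *m Estar adj x 2 in
     [/\ (col_mx w0 w1 == W)%MS, \rank (col_mx w0 w1) = 2%N,
         w0 *m adjmx adj = lam *: w0 + w1,
         (lam = tsigma k b ->
            w1 *m adjmx adj = (lam - theta1 k b) ^+ 2 *: w0 + lam *: w1)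
       & (lam = ttau k b ->
            w1 *m adjmx adj = (lam - theta2 k b) ^+ 2 *: w0 + lam *: w1)]) /\
  (tsigma k b = (theta1 k b + theta2 k b) / 2 /\
   ttau k b = (theta2 k b + theta3 k b) / 2).
Proof.
have lam_neq_m1 := local_eigenvalue_neq_m1 (taylor_b_gt0 HG) Hlam.
split; last split.
- have w0W := nz_row_sub (W *m Estar adj x 1).
  have w0_neq0 : nz_row (W *m Estar adj x 1) != 0.
    by rewrite nz_row_eq0 -mxrank_eq0; case: Hend.
  exact/diameter1_thin_of_rank/(rank_W_Estar HG HW Hend Hloc w0W lam_neq_m1 w0_neq0).
- move=> w0 w0_neq0 w0W w1; rewrite /w1.
  have w1A := w1_adj HG HW Hend Hloc w0W.
  split.
  + exact: (col_mx_w0w1_eqmx HG HW Hend Hloc w0W w0_neq0).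
  + exact: (rank_col_mx_w0w1 HG HW Hend Hloc w0W lam_neq_m1 w0_neq0).
  + exact: (w0_adj HG HW Hend Hloc w0W).
  + by move=> lam_sigma; rewrite w1A [in RHS]lam_sigma tsigma_sub_theta1 sqrrN -lam_sigma.
  + by rewrite w1A /theta2 opprK.
- exact: conj (tsigma_midpoint k b) (ttau_midpoint k b).
Qed.
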